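(* Let $(G,G_1,G_2)$ be a quasi-double Lie group with structure maps $\alpha$ and $m$, and let $\sigma:G_2\times G_1\to G_2$ be defined by: for $a\in G_2$, $g\in G_1$, $\sigma(a,g)$ is the unique element of $G_2$ such that $ag=g'\,\sigma(a,g)$ in $G$ for some $g'\in G_1$. For $a\in G_2$ let $\lambda_a,\rho_a:G_2\to G_2$ be the left and right translations of the loop, $\lambda_a(c)=m(a,c)$, $\rho_a(c)=m(c,a)$. Then for all $a,b,c\in G_2$: \begin{enumerate} \item $\lambda_{m(a,b)}(c)=(\lambda_{\sigma(a,\alpha(b,c))}\circ\lambda_b)(c)$; \item $\rho_{m(a,b)}(c)=(\rho_b\circ\rho_a)(\sigma(c,\alpha(a,b)^{-1}))$; \item $(\rho_b\circ\lambda_a)(c)=(\lambda_{\sigma(a,\alpha(c,b))}\circ\rho_b)(c)$. \end{enumerate}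
   Context: A Lie loop is a real analytic manifold $B$ with an analytic binary operation $(a,b)\mapsto ab=m(a,b)$ having a two-sided neutral element $\varepsilon$, such that the equations $ab=c$ and $ba=c$ have unique solutions depending analytically on the data. It is right mono-alternative if $(ab^{k})b^{l}=ab^{k+l}$ for all integers $k,l$ and all $a,b$ (near $\varepsilon$). A quasi-double Lie group is a triple $(G,G_1,G_2)$ where (i) $G$ is a Lie group with identity $e$ and $G_1$ a closed Lie subgroup of $G$; (ii) $G_2$ is a closed submanifold of $G$ equipped with analytic maps $\alpha:G_2\times G_2\to G_1$ and $m:G_2\times G_2\to G_2$ with $(ab)_G=\alpha(a,b)\,m(a,b)$ for all $a,b\in G_2$ (product in $G$ on the left), such that $m$ makes $G_2$ a right mono-alternative Lie loop; (iii) the map $G_1\times G_2\to G$, $(g,a)\mapsto ga$, is a diffeomorphism. *)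

Set Implicit Arguments.

Record Group := {
  carrier :> Type;
  gmul : carrier -> carrier -> carrier;
  ginv : carrier -> carrier;
  gone : carrier;
  gmulA : forall x y z, gmul x (gmul y z) = gmul (gmul x y) z;
  gmul1l : forall x, gmul gone x = x;
  gmul1r : forall x, gmul x gone = x;
  gmulVl : forall x, gmul (ginv x) x = gone;
  gmulVr : forall x, gmul x (ginv x) = gone
}.

Definition is_subgroup (G : Group) (H : G -> Prop) : Prop :=
  H (gone G) /\ (forall x y, H x -> H y -> H (gmul G x y)) /\
  (forall x, H x -> H (ginv G x)).

Definition is_loop (T : Type) (B : T -> Prop) (m : T -> T -> T) : Prop :=
  (forall a b, B a -> B b -> B (m a b)) /\
  (exists eps, B eps /\ forall a, B a -> m eps a = a /\ m a eps = a) /\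
  (forall a c, B a -> B c -> exists b, B b /\ m a b = c /\
     forall b', B b' -> m a b' = c -> b' = b) /\
  (forall a c, B a -> B c -> exists b, B b /\ m b a = c /\
     forall b', B b' -> m b' a = c -> b' = b).

(* Algebraic part of a quasi-double Lie group (G, G1, G2) with structure maps
   alpha and m. *)
Definition quasi_double (G : Group) (G1 G2 : G -> Prop)
    (alpha m : G -> G -> G) : Prop :=
  @is_subgroup G G1 /\
  (forall a b, G2 a -> G2 b ->
     G1 (alpha a b) /\ G2 (m a b) /\ gmul G a b = gmul G (alpha a b) (m a b)) /\
  @is_loop G G2 m /\
  (forall x : G, exists g a, G1 g /\ G2 a /\ x = gmul G g a) /\
  (forall g a g' a', G1 g -> G2 a -> G1 g' -> G2 a' ->
     gmul G g a = gmul G g' a' -> g = g' /\ a = a').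

Definition is_sigma (G : Group) (G1 G2 : G -> Prop) (sigma : G -> G -> G) : Prop :=
  forall a g, G2 a -> G1 g ->
    G2 (sigma a g) /\ exists g', G1 g' /\ gmul G a g = gmul G g' (sigma a g).


(* Every x in G factors uniquely as g a with g in G1 and a in G2; call a the
   G2-part of x.  Multiplying on the right by an element of G2 acts on G2-parts
   by the loop product m, and multiplying by an element of G1 acts by sigma.
   Each identity then compares the G2-parts of two bracketings of the same
   product in the group G. *)

Section QuasiDouble.

Variables (G : Group) (G1 G2 : G -> Prop) (alpha m sigma : G -> G -> G).
Hypothesis qdG : @quasi_double G G1 G2 alpha m.
Hypothesis sigmaP : @is_sigma G G1 G2 sigma.

Local Infix "·" := (gmul G) (at level 40, left associativity).

Definition G2_part (x a : G) : Prop :=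
  G2 a /\ exists g, G1 g /\ x = g · a.

Lemma G2_part_unique x a b : G2_part x a -> G2_part x b -> a = b.
Proof.
  destruct qdG as (_ & _ & _ & _ & factor_inj).
  intros [Ha [g [Hg ->]]] [Hb [h [Hh E]]].
  exact (proj2 (factor_inj g a h b Hg Ha Hh Hb E)).
Qed.

Lemma G2_part_self a : G2 a -> G2_part a a.
Proof.
  destruct qdG as ((G1_one & _) & _).
  intros Ha; split; [exact Ha|].
  exists (gone G); split; [exact G1_one | now rewrite gmul1l].
Qed.

Lemma G2_part_mulr_G2 x a b : G2_part x a -> G2 b -> G2_part (x · b) (m a b).
Proof.
  destruct qdG as ((_ & G1_mul & _) & alphaP & _).
  intros [Ha [g [Hg ->]]] Hb.
  destruct (alphaP a b Ha Hb) as (Halpha & Hm & E).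
  split; [exact Hm|].
  exists (g · alpha a b); split; [now apply G1_mul|].
  now rewrite <- !gmulA, E.
Qed.

Lemma G2_part_mulr_G1 x a h : G2_part x a -> G1 h -> G2_part (x · h) (sigma a h).
Proof.
  destruct qdG as ((_ & G1_mul & _) & _).
  intros [Ha [g [Hg ->]]] Hh.
  destruct (sigmaP a h Ha Hh) as (Hs & g' & Hg' & E).
  split; [exact Hs|].
  exists (g · g'); split; [now apply G1_mul|].
  now rewrite <- !gmulA, E.
Qed.

Lemma m_assoc_sigma a b c : G2 a -> G2 b -> G2 c ->
  m (m a b) c = m (sigma a (alpha b c)) (m b c).
Proof.
  destruct qdG as (_ & alphaP & _).
  intros Ha Hb Hc.
  destruct (alphaP b c Hb Hc) as (Halpha & Hm & E).
  apply (G2_part_unique (a · b · c)).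
  - apply G2_part_mulr_G2; [|exact Hc].
    now apply G2_part_mulr_G2; [apply G2_part_self|].
  - rewrite <- gmulA, E, gmulA.
    apply G2_part_mulr_G2; [|exact Hm].
    now apply G2_part_mulr_G1; [apply G2_part_self|].
Qed.

Lemma m_assoc_sigma_inv a b c : G2 a -> G2 b -> G2 c ->
  m c (m a b) = m (m (sigma c (ginv G (alpha a b))) a) b.
Proof.
  destruct qdG as ((_ & _ & G1_inv) & alphaP & _).
  intros Ha Hb Hc.
  destruct (alphaP a b Ha Hb) as (Halpha & Hm & E).
  assert (Hprod : c · m a b = c · ginv G (alpha a b) · a · b).
  { assert (Em : ginv G (alpha a b) · (a · b) = m a b)
      by now rewrite E, gmulA, gmulVl, gmul1l.
    now rewrite <- !gmulA, Em. }
  apply (G2_part_unique (c · m a b)).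
  - now apply G2_part_mulr_G2; [apply G2_part_self|].
  - rewrite Hprod.
    apply G2_part_mulr_G2; [|exact Hb].
    apply G2_part_mulr_G2; [|exact Ha].
    now apply G2_part_mulr_G1; [apply G2_part_self | apply G1_inv].
Qed.

End QuasiDouble.

Theorem mainTheorem2 (G : Group) (G1 G2 : G -> Prop) (alpha m sigma : G -> G -> G) :
  @quasi_double G G1 G2 alpha m ->
  @is_sigma G G1 G2 sigma ->
  forall a b c, G2 a -> G2 b -> G2 c ->
    m (m a b) c = m (sigma a (alpha b c)) (m b c) /\
    m c (m a b) = m (m (sigma c (ginv G (alpha a b))) a) b /\
    m (m a c) b = m (sigma a (alpha c b)) (m c b).
Proof.
  intros qdG sigmaP a b c Ha Hb Hc.
  repeat split.
  - eapply m_assoc_sigma; eassumption.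
  - eapply m_assoc_sigma_inv; eassumption.
  - eapply m_assoc_sigma; eassumption.
Qed.
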